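(* Let $c\in(0,1)$, $f_{\mathrm{cost}}(x)=x^c$, and $F_{\mathrm{cost}}(p)=\sum_i f_{\mathrm{cost}}(p(i))$. For any finite set $S$ of $m$ discrete probability distributions, the greedy coupling $\mathcal G_S$ satisfies $F_{\mathrm{cost}}(\mathcal G_S)\le\left(\frac12+\frac{1}{c\,2^c}\right)F_{\mathrm{cost}}(C)$ for every coupling $C$ of $S$.
   Context: A coupling of $S=\{p_1,\dots,p_m\}$ is a joint distribution with marginals $p_1,\dots,p_m$; its cost is $F_{\mathrm{cost}}$ applied to its vector of probabilities. Greedy coupling algorithm: maintain the remaining masses of the states of each distribution in $S$. Repeatedly: let $r=\min_{p\in S}\max_j p(j)$; if $r=0$ stop; otherwise append $r$ as the next state of $\mathcal G_S$ and subtract $r$ from the largest remaining state of every distribution (ties broken arbitrarily). $\mathcal G_S$ is the resulting list of state masses. *)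

From HB Require Import structures.
From mathcomp Require Import all_boot all_order all_algebra.
From mathcomp Require Import reals exp.
Set Implicit Arguments. Unset Strict Implicit. Unset Printing Implicit Defensive.
Import Order.TTheory GRing.Theory Num.Theory.
Local Open Scope ring_scope.

Definition is_distr (R : realType) (T : finType) (p : {ffun T -> R}) : Prop :=
  (forall t, 0 <= p t) /\ \sum_(t : T) p t = 1.

Definition is_coupling (R : realType) (T : finType) (m : nat)
    (p : 'I_m -> {ffun T -> R}) (C : {ffun {ffun 'I_m -> T} -> R}) : Prop :=
  (forall x, 0 <= C x) /\
  (forall (k : 'I_m) (t : T), \sum_(x : {ffun 'I_m -> T} | x k == t) C x = p k t).

Definition maxstate (R : realType) (T : finType) (m : nat)
    (q : 'I_m -> T -> R) (k : 'I_m) : R :=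
  \big[Num.max/0]_(t : T) q k t.

(* r = min_{k} max_j q k j  (the start value of the fold is the overall max,
   so this is the genuine minimum when m > 0, and 0 when m = 0) *)
Definition greedy_r (R : realType) (T : finType) (m : nat)
    (q : 'I_m -> T -> R) : R :=
  \big[Num.min/ \big[Num.max/0]_(k : 'I_m) maxstate q k]_(k : 'I_m) maxstate q k.

Definition greedy_update (R : realType) (T : finType) (m : nat)
    (q : 'I_m -> T -> R) (j : 'I_m -> T) (r : R) : 'I_m -> T -> R :=
  fun k t => if t == j k then q k t - r else q k t.

(* greedy_run q G : G is a possible output (list of state masses) of the greedy
   coupling algorithm started from remaining masses q, ties broken arbitrarily. *)
Inductive greedy_run (R : realType) (T : finType) (m : nat) :
    ('I_m -> T -> R) -> seq R -> Prop :=
| greedy_stop q : greedy_r q = 0 -> greedy_run q [::]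
| greedy_step q (j : 'I_m -> T) G :
    greedy_r q != 0 ->
    (forall k t, q k t <= q k (j k)) ->
    greedy_run (greedy_update q j (greedy_r q)) G ->
    greedy_run q (greedy_r q :: G).

Definition Fcost_seq (R : realType) (c : R) (s : seq R) : R :=
  \sum_(x <- s) powR x c.

Definition Fcost_coupling (R : realType) (T : finType) (m : nat) (c : R)
    (C : {ffun {ffun 'I_m -> T} -> R}) : R :=
  \sum_(x : {ffun 'I_m -> T}) powR (C x) c.

From HB Require Import structures.
From mathcomp Require Import all_boot all_order all_algebra.
From mathcomp Require Import reals exp.
From mathcomp Require Import lra.
Set Implicit Arguments. Unset Strict Implicit. Unset Printing Implicit Defensive.
Import Order.TTheory GRing.Theory Num.Theory.
Local Open Scope ring_scope.

(* The greedy levels r_1 >= r_2 >= ... are nonincreasing.  Charge each atom of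
   mass a of the coupling C the amount
     B_a(r) = min(r, a/2) + [a <= r] a/2
   of greedy mass at levels up to r.  While the current level is r, the greedy
   mass still to be output is at most sum_x B_(C x)(r): the distribution
   realising r has all its states of mass at most r, and a state split among
   several atoms is either untouched or has already lost at least r.  A level r
   costs r^c = r * r^(c-1), and y^(c-1) is decreasing, so the total cost is at
   most sum_x H_(C x)(r_1), where H_a(r) = min(r, a/2)^c / c + [a <= r] a^c / 2
   is the Stieltjes integral of y^(c-1) against B_a; finally
   H_a <= (1/2 + 1/(c 2^c)) a^c.  The induction along the run keeps the
   potential  Fcost(rest) + (B(r) - mass(rest)) r^(c-1) <= H(r). *)

Lemma powR_le_npos (R : realType) (e x y : R) : e <= 0 -> 0 < x -> x <= y ->
  powR y e <= powR x e.
Proof.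
move=> e_le0 x_gt0 xy; have y_gt0 := lt_le_trans x_gt0 xy.
rewrite -[e]opprK !(powRN _ (- e)) lef_pV2 ?posrE ?invr_gt0 ?powR_gt0 //.
by apply: ge0_ler_powR xy; rewrite ?oppr_ge0 ?nnegrE ?(ltW x_gt0) ?(ltW y_gt0).
Qed.

Section ConcavePower.
Variables (R : realType) (c : R).
Hypothesis c01 : 0 < c < 1.

Let c_gt0 : 0 < c. Proof. by case/andP: c01. Qed.
Let c_lt1 : c < 1. Proof. by case/andP: c01. Qed.

Lemma powR_le_tangent (v w : R) : 0 < v -> 0 <= w ->
  powR w c <= powR v c + c * powR v (c - 1) * (w - v).
Proof.
move=> v_gt0 w_ge0; set s := w / v.
have s_ge0 : 0 <= s := divr_ge0 w_ge0 (ltW v_gt0).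
(* Young's inequality for the exponents 1/c and 1/(1 - c), at s^c and 1 *)
have young : powR s c <= 1 - c + c * s.
  have cc_gt0 : 0 < 1 - c by rewrite subr_gt0.
  have := @conjugate_powR R (powR s c) 1 c^-1 (1 - c)^-1 (powR_ge0 _ _) ler01.
  rewrite !invr_gt0 !invrK c_gt0 cc_gt0 addrC subrK => /(_ isT isT erefl).
  rewrite mulr1 -powRrM mulfV ?gt_eqF // powRr1 // powR1; lra.
have -> : w = v * s by rewrite /s mulrCA divff ?gt_eqF ?mulr1.
rewrite powRM ?(ltW v_gt0) // -(mulr_powRB1 (ltW v_gt0) c_gt0).
have := ler_wpM2l (mulr_ge0 (ltW v_gt0) (powR_ge0 v (c - 1))) young.
lra.
Qed.

Lemma powR_diff_ge (w v g : R) : 0 <= w -> w <= v -> v <= g ->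
  (v - w) * powR g (c - 1) <= powR v c / c - powR w c / c.
Proof.
move=> w_ge0 wv vg; have [v_eq0|v_neq0] := eqVneq v 0.
  have w_eq0 : w = 0 by apply/le_anti; rewrite w_ge0 -v_eq0 wv.
  by rewrite v_eq0 w_eq0 !subrr mul0r.
have v_gt0 : 0 < v by rewrite lt_def v_neq0 (le_trans w_ge0 wv).
have slope : powR g (c - 1) <= powR v (c - 1).
  by apply: powR_le_npos; rewrite // subr_le0 (ltW c_lt1).
have vw_ge0 : 0 <= v - w by rewrite subr_ge0.
have := ler_wpM2r (ltW c_gt0) (ler_wpM2l vw_ge0 slope).
have := powR_le_tangent v_gt0 w_ge0.
rewrite -mulrBl ler_pdivlMr //; lra.
Qed.

End ConcavePower.

(* [mass_profile a u] is B_a(u) and [cost_profile c a u] is H_a(u). *)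
Definition mass_profile (R : realType) (a u : R) : R :=
  Num.min u (a / 2) + (if a <= u then a / 2 else 0).

Definition cost_profile (R : realType) (c a u : R) : R :=
  powR (Num.min u (a / 2)) c / c + (if a <= u then powR a c / 2 else 0).

Section Profiles.
Variable R : realType.
Implicit Types a u : R.

Lemma mass_profile0 a : 0 <= a -> mass_profile a 0 = 0.
Proof.
move=> a_ge0; rewrite /mass_profile.
by case: (leP 0 (a / 2)) => ?; case: (leP a 0) => ?; lra.
Qed.

Lemma mass_profile_id a u : 0 <= a -> a <= u -> mass_profile a u = a.
Proof.
by move=> a_ge0 au; rewrite /mass_profile au; case: (leP u (a / 2)) => ?; lra.
Qed.

Lemma mass_profile_lt a u : u < a -> mass_profile a u = Num.min u (a / 2).
Proof. by move=> ua; rewrite /mass_profile leNgt ua addr0. Qed.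

Lemma min_le_mass_profile a u : 0 <= a -> 0 <= u ->
  Num.min a (u / 2) <= mass_profile a u.
Proof.
move=> a_ge0 u_ge0; rewrite /mass_profile.
by case: (leP a u) => ?; case: (leP u (a / 2)) => ?; case: (leP a (u / 2)) => ?;
  lra.
Qed.

Lemma cost_profile0 c a : 0 < c -> 0 <= a -> cost_profile c a 0 = 0.
Proof.
move=> c_gt0 a_ge0; rewrite /cost_profile.
have [a_eq0|a_gt0] := eqVneq a 0.
  by rewrite a_eq0 lexx mul0r minxx powR0 ?gt_eqF // !mul0r addr0.
have -> : Num.min 0 (a / 2) = 0 by apply/min_idPl; rewrite divr_ge0.
by rewrite lt_geF ?lt_def ?a_gt0 // addr0 powR0 ?gt_eqF // mul0r.
Qed.

Lemma cost_profile_le c a u : 0 < c -> 0 <= a -> 0 <= u ->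
  cost_profile c a u <= (2^-1 + (c * powR 2 c)^-1) * powR a c.
Proof.
move=> c_gt0 a_ge0 u_ge0.
have half : powR (a / 2) c = powR a c * (powR 2 c)^-1.
  by rewrite powRM ?invr_ge0 // -powR_inv1 // -powRrM mulN1r powRN.
have cont : powR (Num.min u (a / 2)) c / c <= powR a c * (powR 2 c)^-1 / c.
  rewrite -half ler_wpM2r ?invr_ge0 ?(ltW c_gt0) //.
  have half_ge0 : 0 <= a / 2 by rewrite divr_ge0.
  apply: ge0_ler_powR; rewrite ?nnegrE ?(ltW c_gt0) ?ge_min ?lexx ?orbT //.
  by rewrite le_min u_ge0.
have jump : (if a <= u then powR a c / 2 else 0) <= powR a c / 2.
  by case: ifP; rewrite ?divr_ge0 ?powR_ge0.
rewrite /cost_profile invfM; lra.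
Qed.

End Profiles.

Lemma cost_profile_increment_ge (R : realType) (c a g g' : R) :
  0 < c < 1 -> 0 <= a -> 0 <= g' -> g' <= g ->
  (mass_profile a g - mass_profile a g') * powR g (c - 1)
    <= cost_profile c a g - cost_profile c a g'.
Proof.
move=> c01 a_ge0 g'_ge0 g'g; have /andP[c_gt0 c_lt1] := c01.
have cont : (Num.min g (a / 2) - Num.min g' (a / 2)) * powR g (c - 1)
    <= powR (Num.min g (a / 2)) c / c - powR (Num.min g' (a / 2)) c / c.
  apply: powR_diff_ge => //.
  - by rewrite le_min g'_ge0 divr_ge0.
  - exact: le_min2 g'g (lexx _).
  - by rewrite ge_min lexx.
have jump : ((if a <= g then a / 2 else 0) - (if a <= g' then a / 2 else 0))
      * powR g (c - 1)
    <= (if a <= g then powR a c / 2 else 0)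
       - (if a <= g' then powR a c / 2 else 0).
  have [ag'|g'a] := leP a g'; first by rewrite (le_trans ag' g'g) !subrr mul0r.
  have [ag|_] := leP a g; last by rewrite !subrr mul0r.
  have slope : powR g (c - 1) <= powR a (c - 1).
    apply: powR_le_npos; rewrite ?subr_le0 ?(ltW c_lt1) //.
    exact: le_lt_trans g'_ge0 g'a.
  rewrite !subr0 -(mulr_powRB1 a_ge0 c_gt0).
  have := ler_wpM2l (divr_ge0 a_ge0 (ler0n _ 2)) slope; lra.
rewrite /mass_profile /cost_profile; lra.
Qed.

Lemma min_sum_le_sum_min (R : realType) (I : Type) (r : seq I) (P : pred I)
    (a : I -> R) (w : R) :
  0 <= w -> (forall i, 0 <= a i) ->
  Num.min (\sum_(i <- r | P i) a i) w <= \sum_(i <- r | P i) Num.min (a i) w.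
Proof.
move=> w_ge0 a_ge0.
suff [] : 0 <= \sum_(i <- r | P i) a i /\
    Num.min (\sum_(i <- r | P i) a i) w <= \sum_(i <- r | P i) Num.min (a i) w.
  by [].
apply: (big_ind2 (fun s t => 0 <= s /\ Num.min s w <= t)).
- by split; rewrite // ge_min lexx.
- move=> s1 t1 s2 t2 [s1_ge0 min1] [s2_ge0 min2]; split; first lra.
  move: min1 min2; case: (leP s1 w) => ?; case: (leP s2 w) => ?;
    by case: (leP (s1 + s2) w) => ? ? ?; lra.
- by move=> i _; split; rewrite ?a_ge0.
Qed.

(* [v] is what is left of a state whose original mass is split among the atoms
   [a i] of a coupling, and [u] is the current greedy level: either the state
   is untouched, or it has already lost at least [u]. *)
Lemma sum_mass_profile_ge (R : realType) (I : finType) (P : pred I) (a : I -> R)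
    (u v : R) :
  (forall i, 0 <= a i) -> 0 <= u -> 0 <= v -> v <= u ->
  v <= \sum_(i | P i) a i ->
  (v != \sum_(i | P i) a i -> u <= \sum_(i | P i) a i - v) ->
  v <= \sum_(i | P i) mass_profile (a i) u.
Proof.
move=> a_ge0 u_ge0 v_ge0 vu v_le_sum lost.
have [/existsP[i0 /andP[Pi0 u_lt_ai0]]|] := boolP [exists i, P i && (u < a i)].
  have big_atom S M : 0 <= S -> Num.min S (u / 2) <= M ->
      v <= a i0 + S -> (v != a i0 + S -> u <= a i0 + S - v) ->
      v <= Num.min u (a i0 / 2) + M.
    move=> S_ge0 rest v_le lost'.
    have lost_u : u <= a i0 + S - v by apply: lost'; rewrite lt_eqF //; lra.
    by move: rest; case: (leP u (a i0 / 2)) => ?; case: (leP S (u / 2)) => ? ?;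
      lra.
  rewrite (bigD1 i0) //= mass_profile_lt //.
  move: v_le_sum lost; rewrite (bigD1 i0) //=; apply: big_atom.
  - by rewrite sumr_ge0.
  - apply: le_trans (min_sum_le_sum_min _ _ _ _) (ler_sum _ _) => //.
    + by rewrite divr_ge0.
    + by move=> i _; rewrite min_le_mass_profile.
rewrite negb_exists => /forallP small; rewrite (eq_bigr a) // => i Pi.
by rewrite mass_profile_id //; move: (small i); rewrite Pi -leNgt.
Qed.

Section GreedyLevels.
Variables (R : realType) (T : finType).

Lemma le_maxstate m (q : 'I_m -> T -> R) k t : q k t <= maxstate q k.
Proof. exact: le_bigmax. Qed.

Lemma greedy_r_le_maxstate m (q : 'I_m -> T -> R) k :
  greedy_r q <= maxstate q k.
Proof. exact: bigmin_le. Qed.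

Lemma greedy_r_ge0 m (q : 'I_m -> T -> R) : 0 <= greedy_r q.
Proof. by apply: le_bigmin => [|k _]; apply: bigmax_ge_id. Qed.

Lemma greedy_r_attained m (q : 'I_m -> T -> R) (k : 'I_m) :
  exists k0, greedy_r q = maxstate q k0.
Proof.
rewrite /greedy_r.
have [k0 _ ->] := eq_bigmin (x := \big[Num.max/0]_k maxstate q k) k xpredT
  (maxstate q) isT (fun k _ => le_bigmax _ _ k).
by exists k0.
Qed.

Lemma greedy_r_neq0_attained m (q : 'I_m -> T -> R) :
  greedy_r q != 0 -> exists k0, greedy_r q = maxstate q k0.
Proof.
case: m q => [|m] q; first by rewrite /greedy_r !big_ord0 eqxx.
by move=> _; apply: greedy_r_attained ord0.
Qed.

Lemma le_greedy_r m (q q' : 'I_m -> T -> R) :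
  (forall k t, q' k t <= q k t) -> greedy_r q' <= greedy_r q.
Proof.
case: m q q' => [|m] q q' le_q'q; first by rewrite /greedy_r !big_ord0.
have [k0 ->] := greedy_r_attained q ord0.
by apply: le_trans (greedy_r_le_maxstate q' k0) _; apply: le_bigmax2.
Qed.

Lemma greedy_update_le m (q : 'I_m -> T -> R) j r k t :
  0 <= r -> greedy_update q j r k t <= q k t.
Proof. by move=> r_ge0; rewrite /greedy_update; case: ifP => _; lra. Qed.

Lemma sum_greedy_update m (q : 'I_m -> T -> R) j r k :
  \sum_t greedy_update q j r k t = \sum_t q k t - r.
Proof.
rewrite /greedy_update (bigD1 (j k)) //= eqxx [in RHS](bigD1 (j k)) //= addrAC.
by rewrite (eq_bigr (q k)) // => t /negbTE ->.
Qed.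

Lemma greedy_run_nil m (q : 'I_m -> T -> R) G :
  greedy_run q G -> greedy_r q = 0 -> G = [::].
Proof. by case=> // q' j G' /eqP. Qed.

(* The second clause holds because every level subtracted so far is at least
   the current one. *)
Definition greedy_inv m (p : 'I_m -> {ffun T -> R}) (q : 'I_m -> T -> R) :
    Prop :=
  [/\ forall k t, 0 <= q k t <= p k t,
      forall k t, q k t != p k t -> greedy_r q <= p k t - q k t &
      forall k k', \sum_t q k t = \sum_t q k' t].

Lemma greedy_inv_init m (p : 'I_m -> {ffun T -> R}) :
  (forall k, is_distr (p k)) -> greedy_inv p (fun k t => p k t).
Proof.
move=> p_distr; split=> [k t|k t|k k'].
- by rewrite lexx andbT; case: (p_distr k).
- by rewrite eqxx.
- by case: (p_distr k) => _ ->; case: (p_distr k') => _ ->.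
Qed.

Lemma greedy_inv_update m (p : 'I_m -> {ffun T -> R}) q j :
  greedy_inv p q -> (forall k t, q k t <= q k (j k)) ->
  greedy_inv p (greedy_update q j (greedy_r q)).
Proof.
case=> bounds touched same_total jmax.
have q_ge0 k t : 0 <= q k t by case/andP: (bounds k t).
have q_le_p k t : q k t <= p k t by case/andP: (bounds k t).
have r_ge0 := greedy_r_ge0 q.
have r_le_qj k : greedy_r q <= q k (j k).
  apply: le_trans (greedy_r_le_maxstate q k) _.
  by apply: bigmax_le => [|t _]; [exact: q_ge0 | exact: jmax].
have r'_le_r : greedy_r (greedy_update q j (greedy_r q)) <= greedy_r q.
  by apply: le_greedy_r => k t; apply: greedy_update_le.
split=> [k t|k t|k k']; last by rewrite !sum_greedy_update (same_total k k').
all: rewrite /greedy_update.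
- have := q_ge0 k t; have := q_le_p k t; have := r_le_qj k.
  by case: ifP => [/eqP ->|_] ? ? ?; apply/andP; split; lra.
- case: ifP => [/eqP -> _|_ /touched]; last lra.
  by have := q_le_p k (j k); lra.
Qed.

Lemma greedy_run_sum m (p : 'I_m -> {ffun T -> R}) q G :
  greedy_run q G -> greedy_inv p q -> forall k, \sum_t q k t = \sum_(y <- G) y.
Proof.
elim=> {q G} [q r_eq0 | q j G _ jmax _ IH] inv k.
  have [k0 r_max] := greedy_r_attained q k; case: inv => bounds _ same_total.
  rewrite big_nil (same_total k k0) big1 // => t _; apply/le_anti.
  by case/andP: (bounds k0 t) => -> _; rewrite -r_eq0 r_max le_maxstate.
rewrite big_cons -(IH (greedy_inv_update inv jmax) k) sum_greedy_update.
by rewrite addrC subrK.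
Qed.

End GreedyLevels.

Section GreedyVersusCoupling.
Variables (R : realType) (T : finType) (m : nat).
Variables (p : 'I_m -> {ffun T -> R}) (C : {ffun {ffun 'I_m -> T} -> R}).
Hypothesis C_coupling : is_coupling p C.

Lemma greedy_run_sum_le q G : greedy_run q G -> greedy_inv p q ->
  \sum_(y <- G) y <= \sum_x mass_profile (C x) (greedy_r q).
Proof.
move=> run inv; have [C_ge0 marginal] := C_coupling.
have [r_eq0|r_neq0] := eqVneq (greedy_r q) 0.
  rewrite (greedy_run_nil run r_eq0) big_nil r_eq0 big1 // => x _.
  exact: mass_profile0.
have [k0 r_max] := greedy_r_neq0_attained r_neq0.
rewrite -(greedy_run_sum run inv k0).
rewrite (partition_big (fun x : {ffun 'I_m -> T} => x k0) xpredT) //=.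
apply: ler_sum => t _; case: inv => bounds touched _.
have /andP[q_ge0 q_le_p] := bounds k0 t.
apply: sum_mass_profile_ge; rewrite ?marginal ?r_max ?le_maxstate //.
- by rewrite -r_max greedy_r_ge0.
- by move=> /touched; rewrite r_max.
Qed.

Variable c : R.
Hypothesis c01 : 0 < c < 1.

Let mass u := \sum_x mass_profile (C x) u.
Let cost u := \sum_x cost_profile c (C x) u.

Let mass0 : mass 0 = 0.
Proof. by apply: big1 => x _; rewrite mass_profile0 //; case: C_coupling. Qed.

Lemma greedy_run_cost_le q G : greedy_run q G -> greedy_inv p q ->
  Fcost_seq c G
    + (mass (greedy_r q) - \sum_(y <- G) y) * powR (greedy_r q) (c - 1)
  <= cost (greedy_r q).
Proof.
have /andP[c_gt0 c_lt1] := c01; have [C_ge0 _] := C_coupling.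
elim=> {q G} [q r_eq0 | q j G r_neq0 jmax run IH] inv.
  have cost0 : cost 0 = 0 by apply: big1 => x _; rewrite cost_profile0.
  by rewrite r_eq0 mass0 cost0 /Fcost_seq !big_nil subrr mul0r addr0.
set r := greedy_r q; set q' := greedy_update q j r; set r' := greedy_r q'.
have inv' : greedy_inv p q' := greedy_inv_update inv jmax.
have r_gt0 : 0 < r by rewrite lt_def r_neq0 greedy_r_ge0.
have r'_le_r : r' <= r.
  by apply: le_greedy_r => k t; apply: greedy_update_le; rewrite ltW.
have increment : (mass r - mass r') * powR r (c - 1) <= cost r - cost r'.
  rewrite -!sumrB mulr_suml; apply: ler_sum => x _.
  by apply: cost_profile_increment_ge; rewrite ?greedy_r_ge0.
have tail : (mass r' - \sum_(y <- G) y) * powR r (c - 1)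
    <= (mass r' - \sum_(y <- G) y) * powR r' (c - 1).
  have [r'_eq0|r'_neq0] := eqVneq r' 0.
    by rewrite (greedy_run_nil run r'_eq0) r'_eq0 mass0 big_nil subrr !mul0r.
  apply: ler_wpM2l; first by rewrite subr_ge0 greedy_run_sum_le.
  apply: powR_le_npos r'_le_r; first by rewrite subr_le0 (ltW c_lt1).
  by rewrite lt_def r'_neq0 greedy_r_ge0.
have := IH inv'; rewrite -/r' => IH'.
rewrite /Fcost_seq !big_cons -/(Fcost_seq c G) -(mulr_powRB1 (ltW r_gt0) c_gt0).
lra.
Qed.

End GreedyVersusCoupling.

Theorem theorem6 (R : realType) (c : R) (T : finType) (m : nat)
    (p : 'I_m -> {ffun T -> R}) :
  0 < c < 1 ->
  (forall k, is_distr (p k)) ->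
  forall G : seq R, greedy_run (fun k t => p k t) G ->
  forall C : {ffun {ffun 'I_m -> T} -> R}, is_coupling p C ->
  Fcost_seq c G <= (2^-1 + (c * powR 2 c)^-1) * Fcost_coupling c C.
Proof.
move=> c01 p_distr G run C C_coupling; have [C_ge0 _] := C_coupling.
have inv := greedy_inv_init p_distr.
set r := greedy_r (fun k t => p k t).
have potential := greedy_run_cost_le C_coupling c01 run inv.
have slack :
    0 <= (\sum_x mass_profile (C x) r - \sum_(y <- G) y) * powR r (c - 1).
  by rewrite mulr_ge0 ?powR_ge0 // subr_ge0
       (greedy_run_sum_le C_coupling run inv).
have atoms : \sum_x cost_profile c (C x) r
    <= (2^-1 + (c * powR 2 c)^-1) * Fcost_coupling c C.
  rewrite /Fcost_coupling mulr_sumr; apply: ler_sum => x _.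
  by apply: cost_profile_le; rewrite ?greedy_r_ge0 //; case/andP: c01.
lra.
Qed.
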